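(* Let $b_1,r_1,b_2,r_2$ be positive integers with $b_1r_2-b_2r_1=1$, and let $n>0$ be an integer which is not of the form $xr_1+yr_2$ for any integers $x,y>0$. Then there is no rational number of the form $\frac{b}{n}$ with $b$ an integer lying in the open interval $(\frac{b_2}{r_2},\frac{b_1}{r_1})$, and $$\Delta^n(b_1+b_2,r_1+r_2)=\Delta^n(b_1,r_1)+\Delta^n(b_2,r_2).$$
   Context: For positive integers $b,r$ and an integer $j\ge 1$, let $\overline{jb}$ denote the residue of $jb$ modulo $r$ in $\{0,\dots,r-1\}$, and define $$\overline{M}^j(b,r)=\frac{\overline{jb}\,(r-\overline{jb})}{2r},\qquad M^j(b,r)=\frac{jb\,(r-jb)}{2r},\qquad \Delta^j(b,r)=\overline{M}^j(b,r)-M^j(b,r).$$ *)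

From mathcomp Require Import all_boot all_order all_algebra.
Set Implicit Arguments. Unset Strict Implicit. Unset Printing Implicit Defensive.
Import Order.TTheory GRing.Theory Num.Theory.
Local Open Scope ring_scope.

Definition resid (j b r : nat) : nat := (j * b %% r)%N.

Definition Mbar (j b r : nat) : rat :=
  ((resid j b r)%:R * (r%:R - (resid j b r)%:R)) / (2 * r%:R).

(* M^j(b,r) = jb (r - jb) / (2r)  (computed in rat, r - jb may be negative) *)
Definition Mj (j b r : nat) : rat :=
  ((j * b)%:R * (r%:R - (j * b)%:R)) / (2 * r%:R).

Definition Delta (j b r : nat) : rat := Mbar j b r - Mj j b r.

From mathcomp Require Import all_boot all_order all_algebra.
From mathcomp Require Import zify ring.
Set Implicit Arguments. Unset Strict Implicit. Unset Printing Implicit Defensive.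
Import Order.TTheory GRing.Theory Num.Theory.
Local Open Scope ring_scope.

(* If a multiple k/n lay strictly between b2/r2 and b1/r1, the unimodular
   relation b1 r2 - b2 r1 = 1 would write n = x r1 + y r2 with x, y > 0.
   Hence every ratio n b/r for (b, r) = (b1, r1), (b2, r2), (b1+b2, r1+r2) has
   the same integer part q. On such a bracket [q r, (q+1) r] the residue of
   n b modulo r is n b - q r, so Delta^n(b, r) is linear in (b, r), which
   gives additivity. *)

Lemma Delta_bracket (j b r q : nat) :
  (0 < r)%N -> (q * r <= j * b <= q.+1 * r)%N ->
  Delta j b r = q%:R * (2 * (j * b)%:R - q.+1%:R * r%:R) / 2.
Proof.
move=> r_gt0 /andP[lo hi].
have r_neq0 : (r%:R : rat) != 0 by rewrite pnatr_eq0 -lt0n.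
rewrite /Delta /Mbar /Mj /resid.
have [lt | gt | eq] := ltngtP (j * b) (q.+1 * r); last first.
- by rewrite eq modnMl mulSn natrD natrM; field.
- by move: gt; rewrite ltnNge hi.
have quot : (j * b %/ r = q)%N.
  by apply/eqP; rewrite eqn_leq -ltnS ltn_divLR // lt leq_divRL.
have -> : ((j * b) %% r)%:R = (j * b)%:R - q%:R * r%:R :> rat.
  by rewrite {2}(divn_eq (j * b) r) quot natrD natrM addrAC subrr add0r.
by field.
Qed.

Lemma Delta_add (j b1 r1 b2 r2 q : nat) :
  (0 < r1)%N -> (0 < r2)%N ->
  (q * r1 <= j * b1 <= q.+1 * r1)%N -> (q * r2 <= j * b2 <= q.+1 * r2)%N ->
  Delta j (b1 + b2) (r1 + r2) = Delta j b1 r1 + Delta j b2 r2.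
Proof.
move=> r1_gt0 r2_gt0 br1 br2.
have br12 : (q * (r1 + r2) <= j * (b1 + b2) <= q.+1 * (r1 + r2))%N.
  by move: br1 br2 => /andP[? ?] /andP[? ?]; apply/andP; split; lia.
rewrite (Delta_bracket _ br12) ?addn_gt0 ?r1_gt0 //.
rewrite (Delta_bracket r1_gt0 br1) (Delta_bracket r2_gt0 br2).
by rewrite !natrD !natrM; field.
Qed.

Lemma unimodular_decomposition (b1 r1 b2 r2 n k : int) :
  b1 * r2 - b2 * r1 = 1 -> n = (k * r2 - n * b2) * r1 + (n * b1 - k * r1) * r2.
Proof. by move=> det; rewrite -[LHS]mulr1 -det; ring. Qed.

Lemma no_multiple_strictly_between (b1 r1 b2 r2 n : nat) (k : int) :
  b1%:Z * r2%:Z - b2%:Z * r1%:Z = 1 ->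
  ~ (exists x y : int, 0 < x /\ 0 < y /\ n%:Z = x * r1%:Z + y * r2%:Z) ->
  ~ (n%:Z * b2%:Z < k * r2%:Z /\ k * r1%:Z < n%:Z * b1%:Z).
Proof.
move=> det not_repr [lo hi]; apply: not_repr.
exists (k * r2%:Z - n%:Z * b2%:Z), (n%:Z * b1%:Z - k * r1%:Z).
by rewrite !subr_gt0 lo hi; split => //; split => //; exact: unimodular_decomposition.
Qed.

Lemma ltr_int_ratio (a b : int) (c d : nat) : (0 < c)%N -> (0 < d)%N ->
  (a%:~R / c%:R < b%:~R / d%:R :> rat) = (a * d%:Z < b * c%:Z).
Proof.
move=> c_gt0 d_gt0.
rewrite ltr_pdivrMr ?ltr0n // mulrAC ltr_pdivlMr ?ltr0n //.
by rewrite !pmulrn -!intrM ltr_int.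
Qed.

Lemma unimodular_floor_bracket (b1 r1 b2 r2 n : nat) :
  (0 < r1)%N -> (0 < r2)%N ->
  b1%:Z * r2%:Z - b2%:Z * r1%:Z = 1 ->
  ~ (exists x y : int, 0 < x /\ 0 < y /\ n%:Z = x * r1%:Z + y * r2%:Z) ->
  let q := (n * b2 %/ r2)%N in
  (q * r1 <= n * b1 <= q.+1 * r1)%N /\ (q * r2 <= n * b2 <= q.+1 * r2)%N.
Proof.
move=> r1_gt0 r2_gt0 det not_repr q.
have det_nat : (b1 * r2 = b2 * r1 + 1)%N by lia.
have floor_lo : (q * r2 <= n * b2)%N by rewrite leq_divM.
have floor_hi : (n * b2 < q.+1 * r2)%N by rewrite -ltn_divLR.
have lo1 : (q * r1 <= n * b1)%N.
  rewrite -(leq_pmul2r r2_gt0) mulnAC.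
  apply: leq_trans (leq_mul floor_lo (leqnn r1)) _; nia.
have hi1 : (n * b1 <= q.+1 * r1)%N.
  rewrite leqNgt; apply/negP => gt.
  by apply: (no_multiple_strictly_between (k := q.+1) det not_repr); split; lia.
by rewrite lo1 hi1 floor_lo ltnW.
Qed.

Theorem lemma2p2 (b1 r1 b2 r2 n : nat) :
  (0 < b1)%N -> (0 < r1)%N -> (0 < b2)%N -> (0 < r2)%N ->
  (b1%:Z * r2%:Z - b2%:Z * r1%:Z = 1) ->
  (0 < n)%N ->
  ~ (exists x y : int, 0 < x /\ 0 < y /\ n%:Z = x * r1%:Z + y * r2%:Z) ->
  (forall b : int,
      ~ ((b2%:R / r2%:R : rat) < b%:~R / n%:R /\ b%:~R / n%:R < (b1%:R / r1%:R : rat)))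
  /\ Delta n (b1 + b2) (r1 + r2) = Delta n b1 r1 + Delta n b2 r2.
Proof.
move=> _ r1_gt0 _ r2_gt0 det n_gt0 not_repr; split.
  move=> b; rewrite !pmulrn !ltr_int_ratio // => -[lo hi].
  by apply: (no_multiple_strictly_between (k := b) det not_repr); split; lia.
have [br1 br2] := unimodular_floor_bracket r1_gt0 r2_gt0 det not_repr.
exact: Delta_add br1 br2.
Qed.
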